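(* Let $\gamma>0$ with $\gamma\neq1$, and let $F(\lambda)=\gamma\sin\lambda\cos(\gamma\lambda)-\sin(\gamma\lambda)\cos\lambda$ for $\lambda\in\mathbb{C}$. Then every zero $\lambda_0\neq0$ of $F$ has multiplicity one or three. A zero $\lambda_0\neq0$ has multiplicity three if and only if $\sin\lambda_0=\sin(\gamma\lambda_0)=0$, and in that case $\lambda_0$ is real. If $\gamma$ is irrational, all nonzero zeros of $F$ are simple; if $\gamma$ is rational, $F$ has infinitely many zeros of multiplicity three. *)

From Stdlib Require Import Reals List.
Open Scope R_scope.

Definition Cplx : Type := (R * R)%type.
Definition Re (z : Cplx) : R := fst z.
Definition Im (z : Cplx) : R := snd z.
Definition C0 : Cplx := (0, 0).
Definition RtoC (x : R) : Cplx := (x, 0).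
Definition Cadd (z w : Cplx) : Cplx := (Re z + Re w, Im z + Im w).
Definition Copp (z : Cplx) : Cplx := (- Re z, - Im z).
Definition Csub (z w : Cplx) : Cplx := Cadd z (Copp w).
Definition Cmul (z w : Cplx) : Cplx :=
  (Re z * Re w - Im z * Im w, Re z * Im w + Im z * Re w).
Definition Cnorm (z : Cplx) : R := sqrt (Re z * Re z + Im z * Im z).
Definition Cinv (z : Cplx) : Cplx :=
  (Re z / (Re z * Re z + Im z * Im z), - Im z / (Re z * Re z + Im z * Im z)).
Definition Cdiv (z w : Cplx) : Cplx := Cmul z (Cinv w).

(* Complex sine and cosine (entire extensions of the real ones):
   sin(x+iy) = sin x cosh y + i cos x sinh y,
   cos(x+iy) = cos x cosh y - i sin x sinh y. *)
Definition Csin (z : Cplx) : Cplx :=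
  (sin (Re z) * cosh (Im z), cos (Re z) * sinh (Im z)).
Definition Ccos (z : Cplx) : Cplx :=
  (cos (Re z) * cosh (Im z), - (sin (Re z) * sinh (Im z))).

Definition Fg (g : R) (l : Cplx) : Cplx :=
  Csub (Cmul (RtoC g) (Cmul (Csin l) (Ccos (Cmul (RtoC g) l))))
       (Cmul (Csin (Cmul (RtoC g) l)) (Ccos l)).

Definition C_has_deriv (f : Cplx -> Cplx) (z d : Cplx) : Prop :=
  forall eps : R, 0 < eps -> exists delta : R, 0 < delta /\
    forall h : Cplx, h <> C0 -> Cnorm h < delta ->
      Cnorm (Csub (Cdiv (Csub (f (Cadd z h)) (f z)) h) d) < eps.

Definition zero_mult (f : Cplx -> Cplx) (z0 : Cplx) (m : nat) : Prop :=
  exists D : nat -> Cplx -> Cplx,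
    (forall w, D O w = f w) /\
    (forall k w, C_has_deriv (D k) w (D (S k) w)) /\
    (forall k, (k < m)%nat -> D k z0 = C0) /\
    D m z0 <> C0.

Definition is_rational (x : R) : Prop :=
  exists p q : Z, IZR q <> 0 /\ x = IZR p / IZR q.

(* The complex derivatives of F are computed in closed form: by the
   product-to-sum formulas F(l) = (g-1)/2 sin((1+g)l) + (g+1)/2 sin((1-g)l),
   so every derivative of F is a sum of combinations p sin(c l) + q cos(c l)
   with c = 1 + g and c = 1 - g.  Derivatives are unique, so the order of a zero can
     be read off any tower of successive derivatives.
   - The tower F_deriv of F, with F' = (1-g^2) sin l sin(g l) and explicit
     second and third derivatives.  At a zero of F, sin l = 0 iff
     sin(g l) = 0; if both vanish the third derivative is nonzero (triple
     zero), otherwise F' is nonzero (simple zero).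
   - Common zeros l <> 0 of sin l and sin(g l) are real and force g to be
     rational; conversely for g = p/q every l = n q^2 pi is such a zero. *)

From Stdlib Require Import Reals List Lra Lia Psatz FunctionalExtensionality Classical.
Open Scope R_scope.

Ltac cplx_field :=
  apply injective_projections;
  unfold Csub, Cadd, Copp, Cmul, Cdiv, Cinv, RtoC, C0, Re, Im; simpl; field.

Definition Cnorm2 (z : Cplx) : R := Re z * Re z + Im z * Im z.

Lemma Cnorm2_nonneg z : 0 <= Cnorm2 z.
Proof. unfold Cnorm2; nra. Qed.

Lemma Cnorm2_mul a b : Cnorm2 (Cmul a b) = Cnorm2 a * Cnorm2 b.
Proof. unfold Cnorm2, Cmul, Re, Im; simpl; ring. Qed.

Lemma Cnorm2_add_le a b : Cnorm2 (Cadd a b) <= 2 * (Cnorm2 a + Cnorm2 b).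
Proof.
  unfold Cnorm2, Cadd, Re, Im; simpl.
  pose proof (Rle_0_sqr (fst a - fst b)); pose proof (Rle_0_sqr (snd a - snd b)).
  unfold Rsqr in *; nra.
Qed.

Lemma Cnorm2_RtoC r : Cnorm2 (RtoC r) = r * r.
Proof. unfold Cnorm2, RtoC, Re, Im; simpl; ring. Qed.

Lemma Cnorm2_eq0 z : Cnorm2 z = 0 -> z = C0.
Proof.
  destruct z as [a b]; unfold Cnorm2, C0, Re, Im; simpl; intro H.
  assert (a = 0) by nra; assert (b = 0) by nra; subst; reflexivity.
Qed.

Lemma Cnorm2_pos z : z <> C0 -> 0 < Cnorm2 z.
Proof.
  intro Hz; destruct (Cnorm2_nonneg z) as [H|H]; [exact H|].
  now destruct (Hz (Cnorm2_eq0 z (eq_sym H))).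
Qed.

Lemma Cnorm2_div a h : h <> C0 -> Cnorm2 (Cdiv a h) = Cnorm2 a / Cnorm2 h.
Proof.
  intro Hh; pose proof (Cnorm2_pos h Hh) as Hp.
  destruct a as [a1 a2], h as [h1 h2]; unfold Cnorm2, Cdiv, Cmul, Cinv, Re, Im in *; simpl in *.
  field; lra.
Qed.

Lemma Cnorm_lt_iff z e : 0 < e -> (Cnorm z < e <-> Cnorm2 z < e * e).
Proof.
  intro He; unfold Cnorm; fold (Cnorm2 z); pose proof (Cnorm2_nonneg z).
  rewrite <- (sqrt_square e) at 1 by lra; split.
  - apply sqrt_lt_0_alt.
  - intro; apply sqrt_lt_1_alt; lra.
Qed.

Lemma Csub_eq0 a b : Csub a b = C0 -> a = b.
Proof.
  destruct a, b; unfold Csub, Cadd, Copp, C0, Re, Im; simpl; intro H.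
  injection H as H1 H2; f_equal; lra.
Qed.

Lemma Cmul_eq0 a b : Cmul a b = C0 -> a = C0 \/ b = C0.
Proof.
  intro H; assert (Cnorm2 a * Cnorm2 b = 0) as E
    by (rewrite <- Cnorm2_mul, H; unfold Cnorm2, C0, Re, Im; simpl; ring).
  destruct (Rmult_integral _ _ E); [left|right]; now apply Cnorm2_eq0.
Qed.

Lemma Cmul_ne0 a b : a <> C0 -> b <> C0 -> Cmul a b <> C0.
Proof. intros Ha Hb E; destruct (Cmul_eq0 a b E); contradiction. Qed.

Lemma RtoC_ne0 r : r <> 0 -> RtoC r <> C0.
Proof. intros H E; injection E; exact H. Qed.

Lemma cosh_plus a b : cosh (a + b) = cosh a * cosh b + sinh a * sinh b.
Proof. unfold cosh, sinh; rewrite Ropp_plus_distr, !exp_plus; field. Qed.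

Lemma sinh_plus a b : sinh (a + b) = sinh a * cosh b + cosh a * sinh b.
Proof. unfold cosh, sinh; rewrite Ropp_plus_distr, !exp_plus; field. Qed.

Lemma cosh_neg b : cosh (- b) = cosh b.
Proof. unfold cosh; rewrite Ropp_involutive; field. Qed.

Lemma sinh_neg b : sinh (- b) = - sinh b.
Proof. unfold sinh; rewrite Ropp_involutive; field. Qed.

Lemma cosh_pos b : 0 < cosh b.
Proof. unfold cosh; pose proof (exp_pos b); pose proof (exp_pos (- b)); lra. Qed.

Lemma sinh_eq0 b : sinh b = 0 -> b = 0.
Proof.
  intro H; rewrite <- sinh_0 in H.
  destruct (Rtotal_order b 0) as [Hb|[Hb|Hb]]; [| exact Hb |];
    [pose proof (sinh_lt _ _ Hb) | pose proof (sinh_lt _ _ Hb)]; lra.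
Qed.

Lemma between_abs_le c t : Rmin 0 t <= c <= Rmax 0 t -> c * c <= t * t.
Proof. unfold Rmin, Rmax; destruct (Rle_dec 0 t); intros [H1 H2]; nra. Qed.

Lemma sin_abs_le t : Rabs (sin t) <= Rabs t.
Proof.
  destruct (MVT_abs sin cos 0 t) as [c [Hc _]].
  { intros c _; apply derivable_pt_lim_sin. }
  rewrite sin_0, !Rminus_0_r in Hc; rewrite Hc.
  pose proof (Rabs_pos t); pose proof (COS_bound c).
  assert (Rabs (cos c) <= 1) by (apply Rabs_le; lra); nra.
Qed.

(* 0 <= 1 - cos a <= a^2/2, from cos a = 1 - 2 sin(a/2)^2. *)
Lemma one_minus_cos_bound a : 0 <= 1 - cos a <= a * a / 2.
Proof.
  pose proof (COS_bound a) as Hcos.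
  pose proof (Rsqr_le_abs_1 _ _ (sin_abs_le (a / 2))) as Hsin; unfold Rsqr in Hsin.
  replace (cos a) with (cos (2 * (a / 2))) by (f_equal; field); rewrite cos_2a_sin.
  split; nra.
Qed.

Lemma sin_minus_id_bound t : Rabs (sin t - t) <= t * t * Rabs t / 2.
Proof.
  destruct (MVT_abs (fun x => sin x - x) (fun x => cos x - 1) 0 t) as [c [Hc Hct]].
  { intros c _; apply derivable_pt_lim_minus;
      [apply derivable_pt_lim_sin | apply derivable_pt_lim_id]. }
  rewrite sin_0, !Rminus_0_r in Hc; rewrite Hc.
  pose proof (one_minus_cos_bound c); pose proof (between_abs_le c t Hct).
  rewrite Rabs_minus_sym, (Rabs_right (1 - cos c)) by lra.
  pose proof (Rabs_pos t); nra.
Qed.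

(* Second-order bound for exp near 0, from exp b >= 1 + b and exp b exp(-b)
   = 1. *)
Lemma exp_minus_linear_bound b : -1/2 <= b <= 1/2 -> 0 <= exp b - 1 - b <= 2 * (b * b).
Proof.
  intro Hb.
  pose proof (exp_ineq1_le b); pose proof (exp_ineq1_le (- b)); pose proof (exp_pos b).
  assert (exp b * exp (- b) = 1) by (rewrite <- exp_plus, Rplus_opp_r; apply exp_0).
  split; nra.
Qed.

Lemma cosh_minus_one_bound b : -1/2 <= b <= 1/2 -> 0 <= cosh b - 1 <= 2 * (b * b).
Proof.
  intro Hb; pose proof (exp_minus_linear_bound b Hb).
  pose proof (exp_minus_linear_bound (- b) ltac:(lra)).
  unfold cosh; nra.
Qed.

Lemma sinh_minus_id_bound b : -1/2 <= b <= 1/2 -> Rabs (sinh b - b) <= b * b.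
Proof.
  intro Hb; pose proof (exp_minus_linear_bound b Hb).
  pose proof (exp_minus_linear_bound (- b) ltac:(lra)).
  unfold sinh; apply Rabs_le; nra.
Qed.

Lemma Rabs_le_inv x y : Rabs x <= y -> - y <= x <= y.
Proof. pose proof (Rle_abs x); pose proof (Rle_abs (- x)); rewrite Rabs_Ropp in *; lra. Qed.

(* The real and imaginary parts of Csin h - h and Ccos h - 1 are O(|h|^2),
   with explicit constants, for |h|^2 < 1/4. *)
Lemma near0_trig_bounds a b : a * a + b * b < 1/4 ->
  let N := a * a + b * b in
  Rabs (sin a * cosh b - a) <= 2 * N /\ Rabs (cos a * sinh b - b) <= 2 * N /\
  Rabs (cos a * cosh b - 1) <= 2 * N /\ Rabs (sin a * sinh b) <= 2 * N.
Proof.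
  intros HN N.
  assert (Ha : -1/2 <= a <= 1/2) by nra; assert (Hb : -1/2 <= b <= 1/2) by nra.
  assert (Ha' : Rabs a <= 1/2) by (apply Rabs_le; lra).
  pose proof (Rabs_le_inv _ _ (Rle_trans _ _ _ (sin_abs_le a) Ha')) as Hsa.
  pose proof (Rsqr_le_abs_1 _ _ (sin_abs_le a)) as Hsa2; unfold Rsqr in Hsa2.
  assert (Hsa3 : - (a * a) <= sin a - a <= a * a).
  { apply Rabs_le_inv, (Rle_trans _ _ _ (sin_minus_id_bound a)).
    pose proof (Rabs_pos a); nra. }
  pose proof (one_minus_cos_bound a) as Hca.
  pose proof (cosh_minus_one_bound b Hb) as Hchb.
  pose proof (Rabs_le_inv _ _ (sinh_minus_id_bound b Hb)) as Hshb.
  assert (Hsh : - 1 <= sinh b <= 1) by nra.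
  assert (Hsh2 : sinh b * sinh b <= 4 * (b * b)) by nra.
  unfold N; repeat split; apply Rabs_le.
  - replace (sin a * cosh b - a) with ((sin a - a) + sin a * (cosh b - 1)) by ring; nra.
  - replace (cos a * sinh b - b) with ((sinh b - b) - (1 - cos a) * sinh b) by ring; nra.
  - replace (cos a * cosh b - 1) with ((cosh b - 1) - (1 - cos a) * cosh b) by ring; nra.
  - nra.
Qed.

Lemma Csin_add w h : Csin (Cadd w h) = Cadd (Cmul (Csin w) (Ccos h)) (Cmul (Ccos w) (Csin h)).
Proof.
  unfold Csin, Ccos, Cadd, Cmul, Re, Im; simpl.
  rewrite sin_plus, cos_plus, sinh_plus, cosh_plus; f_equal; ring.
Qed.

Lemma Ccos_add w h : Ccos (Cadd w h) = Csub (Cmul (Ccos w) (Ccos h)) (Cmul (Csin w) (Csin h)).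
Proof.
  unfold Csin, Ccos, Csub, Cadd, Copp, Cmul, Re, Im; simpl.
  rewrite sin_plus, cos_plus, sinh_plus, cosh_plus; f_equal; ring.
Qed.

Lemma Csin_opp w : Csin (Copp w) = Copp (Csin w).
Proof.
  unfold Csin, Copp, Re, Im; simpl; rewrite sin_neg, cos_neg, sinh_neg, cosh_neg; f_equal; ring.
Qed.

Lemma Ccos_opp w : Ccos (Copp w) = Ccos w.
Proof.
  unfold Ccos, Copp, Re, Im; simpl; rewrite sin_neg, cos_neg, sinh_neg, cosh_neg; f_equal; ring.
Qed.

Lemma Csin_near0 h : Cnorm2 h < 1/4 -> Cnorm2 (Csub (Csin h) h) <= 8 * (Cnorm2 h * Cnorm2 h).
Proof.
  destruct h as [a b]; unfold Cnorm2, Csin, Csub, Cadd, Copp, Re, Im; simpl; intro H.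
  destruct (near0_trig_bounds a b H) as [H1 [H2 _]].
  apply Rabs_le_inv in H1, H2; nra.
Qed.

Lemma Ccos_near0 h : Cnorm2 h < 1/4 -> Cnorm2 (Csub (Ccos h) (RtoC 1)) <= 8 * (Cnorm2 h * Cnorm2 h).
Proof.
  destruct h as [a b]; unfold Cnorm2, Ccos, Csub, Cadd, Copp, RtoC, Re, Im; simpl; intro H.
  destruct (near0_trig_bounds a b H) as [_ [_ [H1 H2]]].
  apply Rabs_le_inv in H1, H2; nra.
Qed.

Definition remainder (f : Cplx -> Cplx) (z d h : Cplx) : Cplx :=
  Csub (Csub (f (Cadd z h)) (f z)) (Cmul d h).

Definition quad_approx (f : Cplx -> Cplx) (z d : Cplx) : Prop :=
  exists K r, 0 < r /\ forall h, Cnorm2 h < r ->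
    Cnorm2 (remainder f z d h) <= K * (Cnorm2 h * Cnorm2 h).

Lemma quad_approx_deriv f z d : quad_approx f z d -> C_has_deriv f z d.
Proof.
  intros [K [r [Hr HK]]] eps Heps.
  set (m := Rmin r (eps * eps / (Rabs K + 1))).
  assert (Hm : 0 < m)
    by (apply Rmin_pos; [exact Hr | pose proof (Rabs_pos K); apply Rdiv_lt_0_compat; nra]).
  exists (sqrt m); split; [now apply sqrt_lt_R0|]; intros h Hh0 Hh.
  assert (Hhm : Cnorm2 h < m).
  { rewrite <- (sqrt_sqrt m) by lra; apply (Cnorm_lt_iff h); [now apply sqrt_lt_R0 | exact Hh]. }
  pose proof (Cnorm2_pos h Hh0) as Hpos.
  assert (Hquot : Csub (Cdiv (Csub (f (Cadd z h)) (f z)) h) d = Cdiv (remainder f z d h) h).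
  { unfold remainder; destruct h as [h1 h2]; unfold Cnorm2, Re, Im in Hpos; simpl in Hpos.
    cplx_field; lra. }
  apply Cnorm_lt_iff; [exact Heps|]; rewrite Hquot, Cnorm2_div by exact Hh0.
  apply Rmult_lt_reg_r with (Cnorm2 h); [exact Hpos|].
  unfold Rdiv; rewrite Rmult_assoc, Rinv_l, Rmult_1_r by lra.
  pose proof (HK h (Rlt_le_trans _ _ _ Hhm (Rmin_l _ _))) as Hrem.
  assert (Hsmall : (Rabs K + 1) * Cnorm2 h < eps * eps).
  { pose proof (Rmin_r r (eps * eps / (Rabs K + 1))); pose proof (Rabs_pos K).
    apply (Rmult_lt_compat_l (Rabs K + 1)) in Hhm; [|lra].
    unfold m in Hhm; assert (Hdiv : (Rabs K + 1) * (eps * eps / (Rabs K + 1)) = eps * eps)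
      by (field; lra). nra. }
  pose proof (Rle_abs K); nra.
Qed.

Lemma quad_approx_add f1 f2 z d1 d2 :
  quad_approx f1 z d1 -> quad_approx f2 z d2 ->
  quad_approx (fun w => Cadd (f1 w) (f2 w)) z (Cadd d1 d2).
Proof.
  intros [K1 [r1 [Hr1 H1]]] [K2 [r2 [Hr2 H2]]].
  exists (2 * (K1 + K2)), (Rmin r1 r2); split; [now apply Rmin_pos|]; intros h Hh.
  pose proof (Rmin_l r1 r2); pose proof (Rmin_r r1 r2).
  replace (remainder _ z _ h) with (Cadd (remainder f1 z d1 h) (remainder f2 z d2 h))
    by (unfold remainder; cplx_field).
  eapply Rle_trans; [apply Cnorm2_add_le|].
  pose proof (H1 h ltac:(lra)); pose proof (H2 h ltac:(lra)); lra.
Qed.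

Lemma quad_approx_scale p f z d :
  quad_approx f z d -> quad_approx (fun w => Cmul (RtoC p) (f w)) z (Cmul (RtoC p) d).
Proof.
  intros [K [r [Hr H]]]; exists (p * p * K), r; split; [exact Hr|]; intros h Hh.
  replace (remainder _ z _ h) with (Cmul (RtoC p) (remainder f z d h))
    by (unfold remainder; cplx_field).
  rewrite Cnorm2_mul, Cnorm2_RtoC, (Rmult_assoc (p * p)).
  apply Rmult_le_compat_l; [nra | exact (H h Hh)].
Qed.

Lemma quad_approx_comp_scale c f z d :
  quad_approx f (Cmul (RtoC c) z) d ->
  quad_approx (fun w => f (Cmul (RtoC c) w)) z (Cmul (RtoC c) d).
Proof.
  intros [K [r [Hr H]]]; exists (K * (c * c) * (c * c)), (r / (c * c + 1)).
  split; [apply Rdiv_lt_0_compat; nra|]; intros h Hh.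
  assert (Hch : Cnorm2 (Cmul (RtoC c) h) = c * c * Cnorm2 h)
    by (rewrite Cnorm2_mul, Cnorm2_RtoC; reflexivity).
  assert (Hsmall : Cnorm2 (Cmul (RtoC c) h) < r).
  { pose proof (Cnorm2_nonneg h); rewrite Hch.
    apply (Rmult_lt_compat_r (c * c + 1)) in Hh; [|nra].
    replace (r / (c * c + 1) * (c * c + 1)) with r in Hh by (field; nra); nra. }
  replace (remainder _ z _ h) with (remainder f (Cmul (RtoC c) z) d (Cmul (RtoC c) h)).
  - pose proof (H _ Hsmall) as Hrem; rewrite Hch in Hrem; lra.
  - unfold remainder; f_equal; [f_equal; f_equal; cplx_field | cplx_field].
Qed.

(* A remainder of the form A (Ccos h - 1) + B (Csin h - h) is quadratic;
   this is the shape given by the addition formulas. *)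
Lemma quad_approx_of_trig_remainder f w d A B :
  (forall h, remainder f w d h =
     Cadd (Cmul A (Csub (Ccos h) (RtoC 1))) (Cmul B (Csub (Csin h) h))) ->
  quad_approx f w d.
Proof.
  intro Hrem; exists (16 * (Cnorm2 A + Cnorm2 B)), (1/4); split; [lra|]; intros h Hh.
  rewrite Hrem; eapply Rle_trans; [apply Cnorm2_add_le|]; rewrite !Cnorm2_mul.
  pose proof (Ccos_near0 h Hh); pose proof (Csin_near0 h Hh).
  pose proof (Cnorm2_nonneg A); pose proof (Cnorm2_nonneg B).
  assert (Cnorm2 A * Cnorm2 (Csub (Ccos h) (RtoC 1)) <= Cnorm2 A * (8 * (Cnorm2 h * Cnorm2 h)))
    by (apply Rmult_le_compat_l; lra).
  assert (Cnorm2 B * Cnorm2 (Csub (Csin h) h) <= Cnorm2 B * (8 * (Cnorm2 h * Cnorm2 h)))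
    by (apply Rmult_le_compat_l; lra).
  lra.
Qed.

Lemma quad_approx_sin w : quad_approx Csin w (Ccos w).
Proof.
  apply (quad_approx_of_trig_remainder _ _ _ (Csin w) (Ccos w)); intro h.
  unfold remainder; rewrite Csin_add; cplx_field.
Qed.

Lemma quad_approx_cos w : quad_approx Ccos w (Copp (Csin w)).
Proof.
  apply (quad_approx_of_trig_remainder _ _ _ (Ccos w) (Copp (Csin w))); intro h.
  unfold remainder; rewrite Ccos_add; cplx_field.
Qed.

(* Complex derivatives are unique: both difference quotients along real
   increments approach d1 and d2. *)
Lemma has_deriv_unique f z d1 d2 : C_has_deriv f z d1 -> C_has_deriv f z d2 -> d1 = d2.
Proof.
  intros H1 H2; apply Csub_eq0, Cnorm2_eq0.
  assert (Hsmall : forall eps, 0 < eps -> Cnorm2 (Csub d1 d2) < 4 * (eps * eps)).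
  { intros eps Heps.
    destruct (H1 eps Heps) as [x1 [Hx1 G1]], (H2 eps Heps) as [x2 [Hx2 G2]].
    set (t := Rmin x1 x2 / 2).
    assert (Ht : 0 < t) by (unfold t; pose proof (Rmin_pos x1 x2 Hx1 Hx2); lra).
    assert (Hh : (t, 0) <> C0) by (intro E; injection E; lra).
    assert (Htm : t < Rmin x1 x2) by (unfold t; pose proof (Rmin_pos x1 x2 Hx1 Hx2); lra).
    assert (Hn : Cnorm (t, 0) < Rmin x1 x2).
    { apply Cnorm_lt_iff; [now apply Rmin_pos|]; unfold Cnorm2, Re, Im; simpl; nra. }
    pose proof (Rmin_l x1 x2); pose proof (Rmin_r x1 x2).
    specialize (G1 (t, 0) Hh ltac:(lra)); specialize (G2 (t, 0) Hh ltac:(lra)).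
    apply (Cnorm_lt_iff _ _ Heps) in G1, G2.
    set (Q := Cdiv (Csub (f (Cadd z (t, 0))) (f z)) (t, 0)) in *; clearbody Q.
    replace (Csub d1 d2) with (Cadd (Csub Q d2) (Copp (Csub Q d1))) by cplx_field.
    eapply Rle_lt_trans; [apply Cnorm2_add_le|].
    replace (Cnorm2 (Copp (Csub Q d1))) with (Cnorm2 (Csub Q d1))
      by (unfold Cnorm2, Copp, Re, Im; simpl; ring).
    lra. }
  pose proof (Cnorm2_nonneg (Csub d1 d2)) as Hnn.
  destruct Hnn as [Hpos|Hzero]; [|now symmetry].
  set (N := Cnorm2 (Csub d1 d2)) in *.
  specialize (Hsmall (Rmin 1 (N / 8)) ltac:(apply Rmin_pos; lra)).
  pose proof (Rmin_l 1 (N / 8)); pose proof (Rmin_r 1 (N / 8)); pose proof (Rmin_pos 1 (N / 8)).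
  nra.
Qed.

(* By uniqueness of derivatives, the multiplicity of a zero can be computed
   from any tower of successive derivatives of f. *)
Lemma zero_mult_tower (f : Cplx -> Cplx) (T : nat -> Cplx -> Cplx) :
  (forall w, T O w = f w) -> (forall k w, C_has_deriv (T k) w (T (S k) w)) ->
  forall z m, zero_mult f z m <-> (forall k, (k < m)%nat -> T k z = C0) /\ T m z <> C0.
Proof.
  intros HT0 HT z m; split.
  - intros [D [HD0 [HD [Hlow Htop]]]].
    assert (HDT : forall k, D k = T k).
    { induction k as [|k IH]; apply functional_extensionality; intro w.
      - now rewrite HD0, HT0.
      - apply (has_deriv_unique (T k) w); [rewrite <- IH; apply HD | apply HT]. }
    split; [intros k Hk; rewrite <- HDT; exact (Hlow k Hk) | now rewrite <- HDT].
  - intros [Hlow Htop]; exists T; auto.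
Qed.

Definition trig_comb (c : R) (pq : R * R) (z : Cplx) : Cplx :=
  Cadd (Cmul (RtoC (fst pq)) (Csin (Cmul (RtoC c) z)))
       (Cmul (RtoC (snd pq)) (Ccos (Cmul (RtoC c) z))).

Definition diff_coeffs (c : R) (pq : R * R) : R * R := (- (c * snd pq), c * fst pq).

(* Derivative of trig_comb, with a quadratic remainder so that sums can be
   differentiated. *)
Lemma trig_comb_quad_approx c pq z :
  quad_approx (trig_comb c pq) z (trig_comb c (diff_coeffs c pq) z).
Proof.
  pose proof (quad_approx_add _ _ z _ _
    (quad_approx_scale (fst pq) _ z _ (quad_approx_comp_scale c Csin z _ (quad_approx_sin _)))
    (quad_approx_scale (snd pq) _ z _ (quad_approx_comp_scale c Ccos z _ (quad_approx_cos _))))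
    as H.
  replace (trig_comb c (diff_coeffs c pq) z) with
    (Cadd (Cmul (RtoC (fst pq)) (Cmul (RtoC c) (Ccos (Cmul (RtoC c) z))))
          (Cmul (RtoC (snd pq)) (Cmul (RtoC c) (Copp (Csin (Cmul (RtoC c) z))))))
    by (unfold trig_comb, diff_coeffs; cbn [fst snd]; cplx_field).
  exact H.
Qed.

(* Candidate k-th derivative of F, built from F(z) = (g-1)/2 sin((1+g)z) + (g+1)/2
   sin((1-g)z). *)
Definition F_deriv (g : R) (k : nat) (z : Cplx) : Cplx :=
  Cadd (trig_comb (1 + g) (Nat.iter k (diff_coeffs (1 + g)) ((g - 1) / 2, 0)) z)
       (trig_comb (1 - g) (Nat.iter k (diff_coeffs (1 - g)) ((g + 1) / 2, 0)) z).

Lemma F_deriv_deriv g k z : C_has_deriv (F_deriv g k) z (F_deriv g (S k) z).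
Proof. apply quad_approx_deriv, quad_approx_add; apply trig_comb_quad_approx. Qed.

(* Arguments (1 +- g) z split as z +- g z, so that the addition formulas
   apply. *)
Lemma scale_one_plus g z : Cmul (RtoC (1 + g)) z = Cadd z (Cmul (RtoC g) z).
Proof. cplx_field. Qed.

Lemma scale_one_minus g z : Cmul (RtoC (1 - g)) z = Cadd z (Copp (Cmul (RtoC g) z)).
Proof. cplx_field. Qed.

Ltac F_deriv_expand :=
  unfold F_deriv, Fg, trig_comb; cbn [Nat.iter diff_coeffs fst snd];
  rewrite scale_one_plus, scale_one_minus, !Csin_add, !Ccos_add, Csin_opp, Ccos_opp;
  cplx_field.

Lemma F_deriv0 g z : F_deriv g 0 z = Fg g z.
Proof. F_deriv_expand. Qed.

Lemma F_deriv1 g z :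
  F_deriv g 1 z = Cmul (RtoC (1 - g * g)) (Cmul (Csin z) (Csin (Cmul (RtoC g) z))).
Proof. F_deriv_expand. Qed.

Lemma F_deriv2 g z :
  F_deriv g 2 z = Cmul (RtoC (1 - g * g))
    (Cadd (Cmul (Ccos z) (Csin (Cmul (RtoC g) z)))
          (Cmul (RtoC g) (Cmul (Csin z) (Ccos (Cmul (RtoC g) z))))).
Proof. F_deriv_expand. Qed.

Lemma F_deriv3 g z :
  F_deriv g 3 z = Cmul (RtoC (1 - g * g))
    (Csub (Cmul (RtoC (2 * g)) (Cmul (Ccos z) (Ccos (Cmul (RtoC g) z))))
          (Cmul (RtoC (1 + g * g)) (Cmul (Csin z) (Csin (Cmul (RtoC g) z))))).
Proof. F_deriv_expand. Qed.

Lemma zero_mult_F g z m : zero_mult (Fg g) z m <->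
  (forall k, (k < m)%nat -> F_deriv g k z = C0) /\ F_deriv g m z <> C0.
Proof. apply zero_mult_tower; [apply F_deriv0 | apply F_deriv_deriv]. Qed.

Lemma Csin_zero w : Csin w = C0 -> Im w = 0 /\ sin (Re w) = 0.
Proof.
  destruct w as [x y]; unfold Csin, C0, Re, Im; simpl; intro H; injection H as H1 H2.
  pose proof (cosh_pos y) as Hc; pose proof (sin2_cos2 x) as Hpyth; unfold Rsqr in Hpyth.
  assert (Hs : sin x = 0) by (destruct (Rmult_integral _ _ H1); [assumption | lra]).
  split; [|exact Hs].
  destruct (Rmult_integral _ _ H2) as [Hcos|Hsinh]; [nra | now apply sinh_eq0].
Qed.

Lemma Ccos_ne0_of_Csin_zero w : Csin w = C0 -> Ccos w <> C0.
Proof.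
  intros Hw E; destruct (Csin_zero w Hw) as [Hy Hx].
  destruct w as [x y]; unfold Re, Im in Hx, Hy; simpl in Hx, Hy; subst y.
  unfold Ccos, C0, Re, Im in E; simpl in E; injection E as E1 _.
  rewrite cosh_0, Rmult_1_r in E1.
  pose proof (sin2_cos2 x); unfold Rsqr in *; nra.
Qed.

Lemma Csin_real x : sin x = 0 -> Csin (x, 0) = C0.
Proof.
  intro Hx; unfold Csin, C0, Re, Im; simpl; rewrite Hx, sinh_0; f_equal; ring.
Qed.

Lemma Cmul_RtoC_real c x : Cmul (RtoC c) (x, 0) = (c * x, 0).
Proof. cplx_field. Qed.

Lemma one_minus_sq_ne0 g : 0 < g -> g <> 1 -> 1 - g * g <> 0.
Proof.
  intros Hg Hg1 E; apply Hg1.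
  destruct (Rmult_integral (1 - g) (1 + g)) as [H|H]; [nra | lra | lra].
Qed.

(* At a zero of F, sin z and sin(g z) vanish simultaneously (sin and cos
   have no common zero). *)
Lemma Fg_zero_sin_iff g z : g <> 0 -> Fg g z = C0 ->
  (Csin z = C0 <-> Csin (Cmul (RtoC g) z) = C0).
Proof.
  intros Hg HF; apply Csub_eq0 in HF.
  pose proof (Ccos_ne0_of_Csin_zero z) as Hcz.
  pose proof (Ccos_ne0_of_Csin_zero (Cmul (RtoC g) z)) as Hcgz.
  split; intro Hs; rewrite Hs in HF.
  - assert (Cmul (Csin (Cmul (RtoC g) z)) (Ccos z) = C0) as E
      by (rewrite <- HF; cplx_field).
    destruct (Cmul_eq0 _ _ E) as [H|H]; [exact H | now destruct (Hcz Hs)].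
  - assert (Cmul (RtoC g) (Cmul (Csin z) (Ccos (Cmul (RtoC g) z))) = C0) as E
      by (rewrite HF; cplx_field).
    destruct (Cmul_eq0 _ _ E) as [H|H]; [now destruct (RtoC_ne0 g Hg) |].
    destruct (Cmul_eq0 _ _ H) as [H'|H']; [exact H' | now destruct (Hcgz Hs)].
Qed.

Lemma triple_zero_of_sines g z : 0 < g -> g <> 1 ->
  Csin z = C0 -> Csin (Cmul (RtoC g) z) = C0 -> zero_mult (Fg g) z 3.
Proof.
  intros Hg Hg1 Hs Hgs; apply zero_mult_F; split.
  - intros k Hk; destruct k as [|[|[|k]]]; [| | | exfalso; lia].
    + rewrite F_deriv0; unfold Fg; rewrite Hs, Hgs; cplx_field.
    + rewrite F_deriv1, Hs, Hgs; cplx_field.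
    + rewrite F_deriv2, Hs, Hgs; cplx_field.
  - rewrite F_deriv3, Hs, Hgs.
    replace (Cmul _ _) with (Cmul (RtoC ((1 - g * g) * (2 * g)))
                                  (Cmul (Ccos z) (Ccos (Cmul (RtoC g) z)))) by cplx_field.
    pose proof (one_minus_sq_ne0 g Hg Hg1).
    apply Cmul_ne0; [apply RtoC_ne0; nra | apply Cmul_ne0; now apply Ccos_ne0_of_Csin_zero].
Qed.

Lemma simple_zero_of_sines g z : 0 < g -> g <> 1 -> Fg g z = C0 ->
  Csin z <> C0 -> Csin (Cmul (RtoC g) z) <> C0 -> zero_mult (Fg g) z 1.
Proof.
  intros Hg Hg1 HF Hs Hgs; apply zero_mult_F; split.
  - intros k Hk; destruct k as [|k]; [now rewrite F_deriv0 | exfalso; lia].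
  - rewrite F_deriv1; apply Cmul_ne0; [apply RtoC_ne0, one_minus_sq_ne0 | apply Cmul_ne0]; auto.
Qed.

(* At a triple zero F' vanishes, hence one and therefore both sines vanish. *)
Lemma sines_of_triple_zero g z : 0 < g -> g <> 1 -> zero_mult (Fg g) z 3 ->
  Csin z = C0 /\ Csin (Cmul (RtoC g) z) = C0.
Proof.
  intros Hg Hg1 H3; apply zero_mult_F in H3; destruct H3 as [Hlow _].
  assert (HF : Fg g z = C0) by (rewrite <- F_deriv0; apply Hlow; lia).
  pose proof (Hlow 1%nat ltac:(lia)) as HD1; rewrite F_deriv1 in HD1.
  pose proof (Fg_zero_sin_iff g z ltac:(lra) HF) as Hiff.
  destruct (Cmul_eq0 _ _ HD1) as [H|H];
    [now destruct (RtoC_ne0 _ (one_minus_sq_ne0 g Hg Hg1)) |].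
  destruct (Cmul_eq0 _ _ H) as [Hs|Hgs]; split; try assumption; now apply Hiff.
Qed.

(* A common zero z <> 0 of sin z and sin(g z) gives z = k pi, g z = m pi, so
   g = m/k. *)
Lemma common_sine_zero_rational g z : z <> C0 ->
  Csin z = C0 -> Csin (Cmul (RtoC g) z) = C0 -> is_rational g.
Proof.
  intros Hz Hs Hgs; destruct z as [x y].
  destruct (Csin_zero _ Hs) as [Hy Hx]; unfold Re, Im in Hx, Hy; simpl in Hx, Hy; subst y.
  rewrite Cmul_RtoC_real in Hgs; destruct (Csin_zero _ Hgs) as [_ Hgx]; simpl in Hgx.
  destruct (sin_eq_0_0 x Hx) as [k Hk], (sin_eq_0_0 _ Hgx) as [m Hm].
  assert (Hx0 : x <> 0) by (intro E; apply Hz; now rewrite E).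
  pose proof PI_RGT_0.
  assert (Hk0 : IZR k <> 0) by (intro E; rewrite E in Hk; lra).
  exists m, k; split; [exact Hk0|].
  apply (Rmult_eq_reg_r (IZR k * PI)); [rewrite <- Hk, Hm, Hk; field; exact Hk0 | nra].
Qed.

(* For rational g = p/q, x = n q^2 pi is a common zero of sin x and sin(g
   x), for every n. *)
Lemma rational_sine_zeros_unbounded g : is_rational g ->
  forall M, exists x, M < x /\ sin x = 0 /\ sin (g * x) = 0.
Proof.
  intros [p [q [Hq Hg]]] M; destruct (INR_unbounded M) as [n Hn].
  exists (INR n * (IZR q * IZR q) * PI); repeat split.
  - pose proof (pos_INR n); pose proof PI_RGT_0; pose proof PI2_1.
    assert (1 <= IZR q * IZR q).
    { rewrite <- mult_IZR; apply IZR_le.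
      assert (q <> 0%Z) by (intro E; apply Hq; now rewrite E). nia. }
    assert (INR n <= INR n * (IZR q * IZR q)) by nra.
    assert (INR n * (IZR q * IZR q) <= INR n * (IZR q * IZR q) * PI) by nra.
    lra.
  - apply sin_eq_0_1; exists (Z.of_nat n * q * q)%Z.
    rewrite !mult_IZR, <- INR_IZR_INZ; ring.
  - apply sin_eq_0_1; exists (Z.of_nat n * p * q)%Z.
    rewrite !mult_IZR, <- INR_IZR_INZ, Hg; field; exact Hq.
Qed.

Lemma list_Re_bounded (l : list Cplx) : exists M, forall w, In w l -> Re w <= M.
Proof.
  induction l as [|a l [M HM]]; [exists 0; intros w []|].
  exists (Rmax (Re a) M); intros w [<-|Hw]; [apply Rmax_l |].
  eapply Rle_trans; [exact (HM w Hw) | apply Rmax_r].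
Qed.

Theorem proposition1 (g : R) (hg0 : 0 < g) (hg1 : g <> 1) :
  (forall z : Cplx, z <> C0 -> Fg g z = C0 ->
     zero_mult (Fg g) z 1 \/ zero_mult (Fg g) z 3) /\
  (forall z : Cplx, z <> C0 -> Fg g z = C0 ->
     (zero_mult (Fg g) z 3 <->
      (Csin z = C0 /\ Csin (Cmul (RtoC g) z) = C0))) /\
  (forall z : Cplx, z <> C0 -> zero_mult (Fg g) z 3 -> Im z = 0) /\
  (~ is_rational g ->
     forall z : Cplx, z <> C0 -> Fg g z = C0 -> zero_mult (Fg g) z 1) /\
  (is_rational g ->
     ~ exists l : list Cplx, forall z : Cplx, zero_mult (Fg g) z 3 -> In z l).
Proof.
  assert (Hsines : forall z, Fg g z = C0 ->
    (Csin z = C0 /\ Csin (Cmul (RtoC g) z) = C0) \/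
    (Csin z <> C0 /\ Csin (Cmul (RtoC g) z) <> C0)).
  { intros z HF; pose proof (Fg_zero_sin_iff g z ltac:(lra) HF).
    destruct (classic (Csin z = C0)); tauto. }
  split; [|split; [|split; [|split]]].
  - intros z _ HF; destruct (Hsines z HF) as [[Hs Hgs] | [Hs Hgs]].
    + right; now apply triple_zero_of_sines.
    + left; now apply simple_zero_of_sines.
  - intros z _ _; split; [now apply sines_of_triple_zero |].
    intros [Hs Hgs]; now apply triple_zero_of_sines.
  - intros z _ H3; apply Csin_zero, (sines_of_triple_zero g z hg0 hg1 H3).
  - intros Hirr z Hz HF; destruct (Hsines z HF) as [[Hs Hgs] | [Hs Hgs]].
    + destruct Hirr; exact (common_sine_zero_rational g z Hz Hs Hgs).
    + now apply simple_zero_of_sines.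
  - intros Hrat [l Hl]; destruct (list_Re_bounded l) as [M HM].
    destruct (rational_sine_zeros_unbounded g Hrat M) as [x [Hx [Hs Hgs]]].
    assert (H3 : zero_mult (Fg g) (x, 0) 3).
    { apply triple_zero_of_sines; [exact hg0 | exact hg1 | now apply Csin_real |].
      rewrite Cmul_RtoC_real; now apply Csin_real. }
    specialize (HM _ (Hl _ H3)); unfold Re in HM; simpl in HM; lra.
Qed.
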